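(* Let $\mathcal{I}\subseteq\mathcal{M}_m$ be decreasing, $r=\max_{u\in\mathcal{I}}\deg u$, and $f,g\in\mathcal{I}_r$ with $\deg(\gcd(f,g))=r-3$. Then $$\bigl|\mathrm{LTA}(m,2)\cdot f+\mathrm{LTA}(m,2)\cdot g\bigr|=\bigl|\mathrm{LTA}(m,2)\cdot f\bigr|\cdot\bigl|\mathrm{LTA}(m,2)\cdot g\bigr|.$$
   Context: $\mathcal{M}_m$: square-free monomials in $x_0,\dots,x_{m-1}$ in $\mathbf{R}_m=\mathbb{F}_2[x_0,\dots,x_{m-1}]/(x_i^2-x_i)$; $\operatorname{ind}(u)$ the variable indices, $\deg u=|\operatorname{ind}u|$, $\gcd$ has index set the intersection. For equal-degree monomials with increasing indices, $u\preceq_{sh}v$ iff componentwise $\le$; $u\preceq v$ iff $u\preceq_{sh}v^*\mid v$ for some $v^*$; $\mathcal{I}$ decreasing if $f\in\mathcal{I}$, $g\preceq f\Rightarrow g\in\mathcal{I}$; $\mathcal{I}_r$ its degree-$r$ elements. $\mathrm{LTA}(m,2)$: pairs $(\mathbf{B},\varepsilon)$, $\mathbf{B}=(b_{i,j})$ binary lower unitriangular, $\varepsilon\in\mathbb{F}_2^m$, acting on monomial $u$ by $x_i\mapsto x_i+\sum_{j<i}b_{i,j}x_j+\varepsilon_i$ for $i\in\operatorname{ind}u$; $\mathrm{LTA}(m,2)\cdot f$ is the orbit. $A+B=\{a+b\}$. *)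

From HB Require Import structures.
From mathcomp Require Import all_boot all_order all_algebra.
Set Implicit Arguments. Unset Strict Implicit. Unset Printing Implicit Defensive.
Import GRing.Theory.
Local Open Scope ring_scope.

(* Square-free monomials in x_0..x_{m-1} are identified with their index sets. *)
Notation monomial m := ({set 'I_m}).

(* Elements of R_m = F_2[x]/(x_i^2 - x_i) are identified with Boolean functions
   F_2^m -> F_2 (the canonical isomorphism). *)
Notation point m := ({ffun 'I_m -> 'F_2}).
Notation BF m := ({ffun point m -> 'F_2}).

Definition sortedInd m (u : monomial m) : seq nat := sort leq [seq val i | i <- enum u].

Definition shle m (u v : monomial m) : bool :=
  (#|u| == #|v|)%N && all2 leq (sortedInd u) (sortedInd v).

Definition mprec m (u v : monomial m) : bool :=
  [exists w : monomial m, (w \subset v) && shle u w].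

Definition decreasing m (I : {set monomial m}) : Prop :=
  forall f g : monomial m, f \in I -> mprec g f -> g \in I.

Definition lower_unitri m (B : 'M['F_2]_m) : bool :=
  [forall i : 'I_m, forall j : 'I_m,
     if (j < i)%N then true else B i j == (i == j)%:R].

Definition lta_act m (B : 'M['F_2]_m) (eps : point m) (u : monomial m) : BF m :=
  [ffun x : point m => \prod_(i in u)
      (x i + \sum_(j : 'I_m | (j < i)%N) B i j * x j + eps i)].

Definition lta_orbit m (u : monomial m) : {set BF m} :=
  [set lta_act p.1 p.2 u | p : 'M['F_2]_m * point m & lower_unitri p.1].

Definition setsum m (A B : {set BF m}) : {set BF m} :=
  [set (a : BF m) + b | a : BF m in A, b : BF m in B].

From mathcomp Require Import all_boot all_order all_algebra zify ring.
Set Implicit Arguments. Unset Strict Implicit. Unset Printing Implicit Defensive.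
Import GRing.Theory.
Local Open Scope ring_scope.

(* Every element of an orbit LTA(m,2).u is the indicator of the solution set of a
   triangular affine system x_i = l_i(x_0, ..., x_{i-1}) + c_i (i in u), an affine
   subspace of F_2^m with 2^(m - deg u) points.  If a1 + b1 = a2 + b2 with a_i in
   the orbit of f and b_i in the orbit of g, then every point of the on-set A1 of
   a1 outside A2 lies in A1 /\ B1 or in A1 /\ B2; each of these solves the joint
   system over f \cup g, so has at most k = 2^(m - |f \cup g|) points, while
   |A1| = 2^|g \ f| k >= 8k.  Translating by a point of A1 \ A2 maps A1 /\ A2
   injectively into A1 \ A2, so |A1| <= 2 |A1 \ A2| <= 4k, absurd unless A1 is
   contained in A2.  By symmetry a1 = a2, hence b1 = b2 and the sum map
   (a, b) |-> a + b is injective on the product of the orbits. *)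

Lemma F2_cases (x : 'F_2) : x = 0 \/ x = 1.
Proof. by case: x => [[|[|n]] lt_n2] //=; [left | right]; apply: val_inj. Qed.

Lemma oppr_F2 (x : 'F_2) : - x = x.
Proof. exact/oppr_pchar2/pchar_Fp. Qed.

Lemma prod_F2_eq1 (I : finType) (P : {pred I}) (v : I -> 'F_2) :
  (\prod_(i in P) v i == 1) = [forall i in P, v i == 1].
Proof.
apply/eqP/forall_inP => [prod1 i Pi | all1]; last by rewrite big1 // => i /all1/eqP.
case: (F2_cases (v i)) => [vi0 | ->] //.
by move: prod1; rewrite (bigD1 i) //= vi0 mul0r => /eqP; rewrite eq_sym oner_eq0.
Qed.

Section TriangularSystems.
Variable m : nat.

Lemma card_vanishing_points (P : {set 'I_m}) :
  #|[set z : point m | [forall i in P, z i == 0]]| = (2 ^ (m - #|P|))%N.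
Proof.
have -> : [set z : point m | [forall i in P, z i == 0]] =
          [set z : point m | z \in pffun_on (0 : 'F_2) (~: P) predT].
  apply/setP => z; rewrite !inE; apply/forall_inP/pffun_onP => [z0 | [/supportP z0 _] i Pi].
    by split=> //; apply/supportP => i; rewrite inE negbK => /z0/eqP.
  by apply/eqP/z0; rewrite inE negbK.
have <- : #|~: P| = (m - #|P|)%N by have := cardsC P; rewrite card_ord; lia.
by rewrite cardsE card_pffun_on card_Fp.
Qed.

(* The map x |-> (x_i - c_i x if i in P, x_i otherwise) is injective because c is
   triangular, and sends the solutions onto the points vanishing on P. *)
Lemma card_triangular_solutions (P : {set 'I_m}) (c : 'I_m -> point m -> 'F_2) :
  (forall (i : 'I_m) (x y : point m),
     (forall j : 'I_m, (j < i)%N -> x j = y j) -> c i x = c i y) ->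
  #|[set x : point m | [forall i in P, x i == c i x]]| = (2 ^ (m - #|P|))%N.
Proof.
move=> c_triangular.
pose phi (x : point m) : point m := [ffun i => if i \in P then x i - c i x else x i].
have phi_inj : injective phi.
  move=> x y /ffunP phi_xy.
  suff eq_below n (i : 'I_m) : (i < n)%N -> x i = y i by apply/ffunP => i; apply: (eq_below i.+1).
  elim: n i => [|n IHn] i //; rewrite ltnS leq_eqVlt => /predU1P [ein | ]; last exact: IHn.
  have := phi_xy i; rewrite !ffunE; case: ifP => // _.
  by rewrite (c_triangular i x y) => [/addIr | j ji] //; apply: IHn; rewrite -ein.
rewrite -(card_vanishing_points P) -[RHS](card_preimset _ phi_inj).
apply: eq_card => x; rewrite !inE.
by apply: eq_forallb_in => i Pi; rewrite ffunE Pi subr_eq0.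
Qed.

End TriangularSystems.

Section LTAOrbits.
Variable m : nat.
Implicit Types (B : 'M['F_2]_m) (e x y z : point m) (u : monomial m) (a b : BF m).

Definition onset a : {set point m} := [set x | a x == 1].

Lemma onsetN a x : (x \notin onset a) = (a x == 0).
Proof. by rewrite inE; case: (F2_cases (a x)) => ->. Qed.

Lemma onset_inj : injective onset.
Proof.
move=> a b /setP ab; apply/ffunP => x; have := ab x; rewrite !inE.
by case: (F2_cases (a x)) => ->; case: (F2_cases (b x)) => ->.
Qed.

(* The equation x_i + l_i(x) + e_i = 1 solved for x_i. *)
Definition lta_rhs B e (i : 'I_m) x : 'F_2 :=
  1 + \sum_(j : 'I_m | (j < i)%N) B i j * x j + e i.

Lemma lta_rhs_triangular B e (i : 'I_m) x y :
  (forall j : 'I_m, (j < i)%N -> x j = y j) -> lta_rhs B e i x = lta_rhs B e i y.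
Proof. by move=> xy; congr (_ + _ + _); apply: eq_bigr => j /xy ->. Qed.

Lemma lta_rhs_affine B e (i : 'I_m) x y z :
  lta_rhs B e i (x - y + z) = lta_rhs B e i x - lta_rhs B e i y + lta_rhs B e i z.
Proof.
rewrite /lta_rhs; under eq_bigr do rewrite !ffunE mulrDr mulrBr.
by rewrite big_split sumrB /=; ring.
Qed.

Lemma lta_act_onsetE B e u x :
  (x \in onset (lta_act B e u)) = [forall i in u, x i == lta_rhs B e i x].
Proof.
rewrite inE ffunE prod_F2_eq1; apply: eq_forallb_in => i _.
by rewrite /lta_rhs -addrA -(addrA 1) -subr_eq oppr_F2.
Qed.

Lemma card_lta_onset B e u : #|onset (lta_act B e u)| = (2 ^ (m - #|u|))%N.
Proof.
rewrite -(@card_triangular_solutions m u (lta_rhs B e)); last exact: lta_rhs_triangular.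
by apply: eq_card => x; rewrite lta_act_onsetE inE.
Qed.

Lemma card_lta_onsetI_le B e C d (f g : monomial m) :
  (#|onset (lta_act B e f) :&: onset (lta_act C d g)| <= 2 ^ (m - #|f :|: g|))%N.
Proof.
pose c i x := if i \in f then lta_rhs B e i x else lta_rhs C d i x.
rewrite -(@card_triangular_solutions m (f :|: g) c); last first.
  by move=> i x y xy; rewrite /c; case: ifP => _; apply: lta_rhs_triangular.
apply/subset_leq_card/subsetP => x; rewrite inE !lta_act_onsetE inE.
case/andP=> /forall_inP xf /forall_inP xg; apply/forall_inP => i.
by rewrite /c inE; case: ifP => [/xf | _ /xg].
Qed.

Lemma lta_onset_affine B e u x y z :
  x \in onset (lta_act B e u) -> y \in onset (lta_act B e u) ->
  z \in onset (lta_act B e u) -> x - y + z \in onset (lta_act B e u).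
Proof.
rewrite !lta_act_onsetE => /forall_inP xu /forall_inP yu /forall_inP zu.
apply/forall_inP => i ui; rewrite lta_rhs_affine !ffunE.
by rewrite (eqP (xu i ui)) (eqP (yu i ui)) (eqP (zu i ui)).
Qed.

(* For p in A \ B and c in A /\ B, the translation by p - c maps A /\ B into A \ B. *)
Lemma affine_cardI_le_cardD (A B : {set point m}) p :
  {in A & A & A, forall x y z, x - y + z \in A} ->
  {in B & B & B, forall x y z, x - y + z \in B} ->
  p \in A :\: B -> (#|A :&: B| <= #|A :\: B|)%N.
Proof.
move=> A_affine B_affine /setDP [pA pNB].
have [-> | [c /setIP [cA cB]]] := set_0Vmem (A :&: B); first by rewrite cards0.
rewrite -(card_imset _ (addIr (- c + p))).
apply/subset_leq_card/subsetP => _ /imsetP [x /setIP [xA xB] ->].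
rewrite addrA inE A_affine // andbT; apply: contra pNB => yB.
have := B_affine _ _ _ yB xB cB.
by rewrite (addrAC (x - c)) (addrAC x) subrr add0r addrAC addNr add0r.
Qed.

Lemma lta_onset_sub (f g : monomial m) B1 e1 B2 e2 C1 d1 C2 d2 :
  (3 <= #|g :\: f|)%N ->
  lta_act B1 e1 f + lta_act C1 d1 g = lta_act B2 e2 f + lta_act C2 d2 g ->
  onset (lta_act B1 e1 f) \subset onset (lta_act B2 e2 f).
Proof.
move=> gf3 /ffunP sum_eq; apply/subsetPn => -[p pA1 pNA2].
set A1 := onset (lta_act B1 e1 f); set A2 := onset (lta_act B2 e2 f).
set k := (2 ^ (m - #|f :|: g|))%N.
have k_gt0 : (0 < k)%N by rewrite expn_gt0.
have card_A1 : (8 * k <= #|A1|)%N.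
  have fg_le_m : (#|f :|: g| <= m)%N by rewrite -[m in (_ <= m)%N]card_ord max_card.
  rewrite card_lta_onset.
  have -> : (m - #|f| = #|g :\: f| + (m - #|f :|: g|))%N.
    by have := cardsUI f g; have := cardsID f g; rewrite setIC; lia.
  by rewrite expnD leq_pmul2r // (@leq_pexp2l 2 3).
have A1DA2 : (#|A1 :\: A2| <= 2 * k)%N.
  have : A1 :\: A2 \subset
         (A1 :&: onset (lta_act C1 d1 g)) :|: (A1 :&: onset (lta_act C2 d2 g)).
    apply/subsetP => x /setDP [xA1 xNA2]; rewrite !in_setU !in_setI xA1 /= !inE.
    move: xA1 xNA2; rewrite /A1 /A2 onsetN inE => /eqP a1x /eqP a2x.
    have := sum_eq x; rewrite ffunE [RHS]ffunE a1x a2x add0r.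
    by case: (F2_cases (lta_act C1 d1 g x)) => ->; rewrite ?addr0 => <-; rewrite eqxx ?orbT.
  move/subset_leq_card/leq_trans; apply; rewrite cardsU mul2n -addnn.
  by apply/(leq_trans (leq_subr _ _))/leq_add; apply: card_lta_onsetI_le.
have A1A2_le : (#|A1 :&: A2| <= #|A1 :\: A2|)%N.
  by apply: (affine_cardI_le_cardD (p := p)) => [x y z | x y z | ];
    [apply: lta_onset_affine | apply: lta_onset_affine | rewrite in_setD pNA2].
have := cardsID A2 A1; lia.
Qed.

Lemma lta_sum_cancel (f g : monomial m) B1 e1 B2 e2 C1 d1 C2 d2 :
  (3 <= #|g :\: f|)%N ->
  lta_act B1 e1 f + lta_act C1 d1 g = lta_act B2 e2 f + lta_act C2 d2 g ->
  lta_act B1 e1 f = lta_act B2 e2 f.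
Proof.
move=> gf3 sum_eq; apply: onset_inj; apply/eqP; rewrite eqEsubset.
by rewrite !(lta_onset_sub gf3 sum_eq, lta_onset_sub gf3 (esym sum_eq)).
Qed.

End LTAOrbits.

Lemma card_setsum_lta_orbit m (f g : monomial m) :
  (3 <= #|g :\: f|)%N ->
  #|setsum (lta_orbit f) (lta_orbit g)| = (#|lta_orbit f| * #|lta_orbit g|)%N.
Proof.
move=> gf3; rewrite /setsum curry_imset2X card_in_imset ?cardsX //.
move=> [a1 b1] [a2 b2] /setXP [/imsetP [p1 _ ->] /imsetP [q1 _ ->]].
move=> /setXP [/imsetP [p2 _ ->] /imsetP [q2 _ ->]] /= sum_eq.
have a12 := lta_sum_cancel gf3 sum_eq.
by rewrite a12 in sum_eq *; rewrite (addrI _ sum_eq).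
Qed.

Theorem mainTheorem12 (m : nat) (I : {set monomial m}) (f g : monomial m) :
  decreasing I ->
  f \in I -> g \in I ->
  #|f| = \max_(u in I) #|u| ->
  #|g| = \max_(u in I) #|u| ->
  (#|f :&: g| + 3)%N = \max_(u in I) #|u| ->
  #|setsum (lta_orbit f) (lta_orbit g)| = (#|lta_orbit f| * #|lta_orbit g|)%N.
Proof.
(* Only |g \ f| = 3 matters. *)
move=> _ _ _ deg_f deg_g deg_gcd; apply: card_setsum_lta_orbit.
by rewrite cardsD setIC; lia.
Qed.
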